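(* Let $\mathcal{P}$ be a class of Banach spaces containing all finite-dimensional Banach spaces, and let $\{S_n\}_{n=1}^\infty$ be a sequence of finite metric spaces which is a set of test-spaces for $\mathcal{P}$. Then there exists a metric space $S$ such that $\{S\}$ is a set of test-spaces for $\mathcal{P}$.
   Context: A set $\{T_\alpha\}_{\alpha\in A}$ of metric spaces is a set of test-spaces for a class $\mathcal{P}$ of Banach spaces if for every Banach space $X$ the following are equivalent: (1) $X\notin\mathcal{P}$; (2) the spaces $T_\alpha$ admit bilipschitz embeddings into $X$ with uniformly bounded distortions (distortion of $f$ being $\mathrm{Lip}(f)\cdot\mathrm{Lip}(f^{-1})$). For a single space $S$, (2) means $S$ admits a bilipschitz embedding into $X$. *)

From Stdlib Require Import Reals Lra List.
Open Scope R_scope.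

Record MetricSpace := {
  ms_car :> Type;
  ms_dist : ms_car -> ms_car -> R;
  ms_dist_nonneg : forall x y, 0 <= ms_dist x y;
  ms_dist_eq0 : forall x y, ms_dist x y = 0 <-> x = y;
  ms_dist_sym : forall x y, ms_dist x y = ms_dist y x;
  ms_dist_tri : forall x y z, ms_dist x z <= ms_dist x y + ms_dist y z
}.

Definition finite_metric (M : MetricSpace) : Prop :=
  exists l : list (ms_car M), forall x, In x l.

Record BanachSpace := {
  bs_car :> Type;
  bs_zero : bs_car;
  bs_add : bs_car -> bs_car -> bs_car;
  bs_opp : bs_car -> bs_car;
  bs_scal : R -> bs_car -> bs_car;
  bs_norm : bs_car -> R;
  bs_addA : forall x y z, bs_add x (bs_add y z) = bs_add (bs_add x y) z;
  bs_addC : forall x y, bs_add x y = bs_add y x;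
  bs_add0 : forall x, bs_add x bs_zero = x;
  bs_addN : forall x, bs_add x (bs_opp x) = bs_zero;
  bs_scalA : forall a b x, bs_scal a (bs_scal b x) = bs_scal (a * b) x;
  bs_scal1 : forall x, bs_scal 1 x = x;
  bs_scalDr : forall a x y, bs_scal a (bs_add x y) = bs_add (bs_scal a x) (bs_scal a y);
  bs_scalDl : forall a b x, bs_scal (a + b) x = bs_add (bs_scal a x) (bs_scal b x);
  bs_norm_nonneg : forall x, 0 <= bs_norm x;
  bs_norm_eq0 : forall x, bs_norm x = 0 <-> x = bs_zero;
  bs_norm_scal : forall a x, bs_norm (bs_scal a x) = Rabs a * bs_norm x;
  bs_norm_tri : forall x y, bs_norm (bs_add x y) <= bs_norm x + bs_norm y;
  bs_complete : forall u : nat -> bs_car,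
    (forall eps, 0 < eps -> exists N, forall m n, (N <= m)%nat -> (N <= n)%nat ->
        bs_norm (bs_add (u m) (bs_opp (u n))) < eps) ->
    exists l, forall eps, 0 < eps -> exists N, forall n, (N <= n)%nat ->
        bs_norm (bs_add (u n) (bs_opp l)) < eps
}.

Definition bs_dist (X : BanachSpace) (x y : X) : R :=
  bs_norm X (bs_add X x (bs_opp X y)).

Fixpoint lin_comb (X : BanachSpace) (cs : list R) (vs : list X) : X :=
  match cs, vs with
  | c :: cs', v :: vs' => bs_add X (bs_scal X c v) (lin_comb X cs' vs')
  | _, _ => bs_zero X
  end.

Definition finite_dim (X : BanachSpace) : Prop :=
  exists vs : list X, forall x, exists cs : list R,
    length cs = length vs /\ x = lin_comb X cs vs.

(** f : M -> X is a bilipschitz embedding with distortion at most D: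
    there is a scale r > 0 with r d(x,y) <= ||f x - f y|| <= D r d(x,y).
    (For such f, Lip(f) * Lip(f^{-1}) <= D, and conversely.) *)
Definition embeds_with_distortion (M : MetricSpace) (X : BanachSpace) (D : R) : Prop :=
  exists (f : M -> X) (r : R), 0 < r /\
    forall x y, r * ms_dist M x y <= bs_dist X (f x) (f y)
                /\ bs_dist X (f x) (f y) <= D * r * ms_dist M x y.

Definition test_spaces {A : Type} (T : A -> MetricSpace)
    (P : BanachSpace -> Prop) : Prop :=
  forall X : BanachSpace,
    ~ P X <-> exists D : R, forall a : A, embeds_with_distortion (T a) X D.

Definition test_space (S : MetricSpace) (P : BanachSpace -> Prop) : Prop :=
  test_spaces (fun _ : unit => S) P.

From Stdlib Require Import Reals List.
From Stdlib Require Import Lra Classical ClassicalEpsilon ChoiceFacts Eqdep_dec.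
Open Scope R_scope.

(** Rescale each [S_n]
    to diameter at most 1 and glue the copies along the integers: in the glued
    space [S], points of the [n]-th and [m]-th copy (n <> m) are at distance
    [|n - m|].
    - If [S] embeds into [X] with distortion [D], so does every copy, hence
      every [S_n] (rescaling does not change distortion); thus [X] is not in [P].
    - If [X] is not in [P], all [S_n] embed into [X] with a common distortion
      [D >= 1], and [X] is not finite-dimensional, so it has a unit vector [u].
      Normalise the embeddings to have images in the ball of radius [D] and
      translate the [n]-th one by [4 D n u]: distinct copies are then pushed
      apart proportionally to [|n - m|], and [S] embeds with distortion [6 D]. *)

Section VectorAlgebra.
Variable X : BanachSpace.
Notation add := (bs_add X).
Notation opp := (bs_opp X).
Notation scal := (bs_scal X).
Notation nrm := (bs_norm X).
Notation zero := (bs_zero X).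

Lemma add0l x : add zero x = x.
Proof. rewrite bs_addC, bs_add0; reflexivity. Qed.

Lemma scal0 x : scal 0 x = zero.
Proof.
  set (s := scal 0 x).
  assert (Hs : s = add s s) by (unfold s; rewrite <- bs_scalDl; f_equal; lra).
  transitivity (add (add s s) (opp s)).
  - rewrite <- bs_addA, bs_addN, bs_add0. reflexivity.
  - rewrite <- Hs. apply bs_addN.
Qed.

Lemma opp_unique x y : add x y = zero -> y = opp x.
Proof.
  intro H. rewrite <- (bs_add0 X (opp x)), <- H, bs_addA.
  rewrite (bs_addC X (opp x) x), bs_addN, add0l. reflexivity.
Qed.

Lemma opp_scal x : opp x = scal (-1) x.
Proof.
  symmetry. apply opp_unique.
  rewrite <- (bs_scal1 X x) at 1. rewrite <- bs_scalDl.
  replace (1 + -1) with 0 by lra. apply scal0.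
Qed.

Lemma norm_opp x : nrm (opp x) = nrm x.
Proof.
  rewrite opp_scal, bs_norm_scal, Rabs_left by lra. lra.
Qed.

Lemma sub_add_add p t q w :
  add (add p t) (opp (add q w)) = add (add p (opp q)) (add t (opp w)).
Proof.
  rewrite !opp_scal, bs_scalDr, <- !opp_scal, !bs_addA. f_equal.
  rewrite <- !bs_addA. f_equal. apply bs_addC.
Qed.

Lemma dist_translate x y t : bs_dist X (add x t) (add y t) = bs_dist X x y.
Proof. unfold bs_dist. rewrite sub_add_add, bs_addN, bs_add0. reflexivity. Qed.

Lemma dist_line a b u : bs_dist X (scal a u) (scal b u) = Rabs (a - b) * nrm u.
Proof.
  unfold bs_dist. rewrite opp_scal, bs_scalA, <- bs_scalDl, bs_norm_scal.
  f_equal. f_equal. lra.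
Qed.

Lemma dist_le_norms x y : bs_dist X x y <= nrm x + nrm y.
Proof. unfold bs_dist. rewrite <- (norm_opp y). apply bs_norm_tri. Qed.

Lemma dist_perturb p q t w :
  bs_dist X t w - bs_dist X p q <= bs_dist X (add p t) (add q w)
  <= bs_dist X t w + bs_dist X p q.
Proof.
  unfold bs_dist. rewrite sub_add_add.
  set (a := add p (opp q)). set (b := add t (opp w)).
  split; [| rewrite Rplus_comm; apply bs_norm_tri].
  assert (Eb : b = add (add a b) (opp a)).
  { rewrite (bs_addC X a b), <- bs_addA, bs_addN, bs_add0. reflexivity. }
  pose proof (bs_norm_tri X (add a b) (opp a)) as H.
  rewrite <- Eb, norm_opp in H. lra.
Qed.

(** A Banach space that is not finite-dimensional has a unit vector
    (it is not [{0}], which is spanned by the empty family). *)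
Lemma unit_vector_of_infinite_dim : ~ finite_dim X -> exists u : X, nrm u = 1.
Proof.
  intro Hinf.
  destruct (classic (exists x : X, x <> zero)) as [[x Hx] | Hzero].
  - assert (Hpos : 0 < nrm x).
    { destruct (bs_norm_nonneg X x) as [H | H]; [exact H |].
      exfalso. apply Hx, bs_norm_eq0. auto. }
    exists (scal (/ nrm x) x).
    rewrite bs_norm_scal, Rabs_right by (left; apply Rinv_0_lt_compat; lra).
    field. lra.
  - exfalso. apply Hinf. exists nil. intro x. exists nil. split; [reflexivity |].
    apply NNPP. intro Hx. apply Hzero. exists x. exact Hx.
Qed.
End VectorAlgebra.

Lemma list_bounded_from (M : MetricSpace) (a : M) (l : list M) :
  exists C, 0 <= C /\ forall y, In y l -> ms_dist M a y <= C.
Proof.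
  induction l as [| b l [C [HC0 HC]]].
  - exists 0. split; [lra | intros y []].
  - exists (Rmax C (ms_dist M a b)). split.
    + apply Rle_trans with C; [lra | apply Rmax_l].
    + intros y [<- | Hy]; [apply Rmax_r |].
      apply Rle_trans with C; [auto | apply Rmax_l].
Qed.

Lemma finite_metric_bounded (M : MetricSpace) :
  finite_metric M -> exists B, 0 <= B /\ forall x y, ms_dist M x y <= B.
Proof.
  intros [[| a l] Hl].
  - exists 0. split; [lra | intros x; destruct (Hl x)].
  - destruct (list_bounded_from M a (a :: l)) as [C [HC0 HC]].
    exists (2 * C). split; [lra |]. intros x y.
    pose proof (ms_dist_tri M x a y). rewrite (ms_dist_sym M x a) in H.
    pose proof (HC x (Hl x)). pose proof (HC y (Hl y)). lra.
Qed.

Section Rescale.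
Variables (M : MetricSpace) (s : R).
Hypothesis hs : 0 < s.

Definition rescale_dist (x y : M) : R := s * ms_dist M x y.

Lemma rescale_nonneg x y : 0 <= rescale_dist x y.
Proof. apply Rmult_le_pos; [lra | apply ms_dist_nonneg]. Qed.

Lemma rescale_eq0 x y : rescale_dist x y = 0 <-> x = y.
Proof.
  unfold rescale_dist. rewrite <- ms_dist_eq0. split; intro H.
  - apply Rmult_integral in H. destruct H; [lra | assumption].
  - rewrite H. ring.
Qed.

Lemma rescale_sym x y : rescale_dist x y = rescale_dist y x.
Proof. unfold rescale_dist. rewrite ms_dist_sym. reflexivity. Qed.

Lemma rescale_tri x y z : rescale_dist x z <= rescale_dist x y + rescale_dist y z.
Proof.
  unfold rescale_dist. rewrite <- Rmult_plus_distr_l.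
  apply Rmult_le_compat_l; [lra | apply ms_dist_tri].
Qed.

Definition rescale : MetricSpace :=
  {| ms_car := ms_car M; ms_dist := rescale_dist;
     ms_dist_nonneg := rescale_nonneg; ms_dist_eq0 := rescale_eq0;
     ms_dist_sym := rescale_sym; ms_dist_tri := rescale_tri |}.

Lemma embeds_rescale X D :
  embeds_with_distortion rescale X D <-> embeds_with_distortion M X D.
Proof.
  split; intros [f [r [Hr Hf]]].
  - exists f, (r * s). split; [apply Rmult_lt_0_compat; lra |].
    intros x y. destruct (Hf x y) as [H1 H2]. simpl in H1, H2.
    unfold rescale_dist in H1, H2. split; lra.
  - exists f, (r / s). split; [apply Rdiv_lt_0_compat; lra |].
    intros x y. destruct (Hf x y) as [H1 H2]. simpl. unfold rescale_dist.
    replace (r / s * (s * ms_dist M x y)) with (r * ms_dist M x y) by (field; lra).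
    replace (D * (r / s) * (s * ms_dist M x y)) with (D * r * ms_dist M x y)
      by (field; lra).
    split; assumption.
Qed.
End Rescale.

Section Embeddings.
Variables (M : MetricSpace) (X : BanachSpace).

Lemma embeds_mono D D' :
  D <= D' -> embeds_with_distortion M X D -> embeds_with_distortion M X D'.
Proof.
  intros HD [f [r [Hr Hf]]]. exists f, r. split; [exact Hr |].
  intros x y. destruct (Hf x y) as [H1 H2]. split; [exact H1 |].
  apply Rle_trans with (D * r * ms_dist M x y); [exact H2 |].
  apply Rmult_le_compat_r; [apply ms_dist_nonneg |].
  apply Rmult_le_compat_r; lra.
Qed.

Lemma embeds_isometric (N : MetricSpace) (g : N -> M) D :
  (forall x y, ms_dist M (g x) (g y) = ms_dist N x y) ->
  embeds_with_distortion M X D -> embeds_with_distortion N X D.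
Proof.
  intros Hg [f [r [Hr Hf]]]. exists (fun x => f (g x)), r. split; [exact Hr |].
  intros x y. rewrite <- Hg. apply Hf.
Qed.

Lemma embeds_centered D :
  0 <= D -> (forall x y, ms_dist M x y <= 1) ->
  embeds_with_distortion M X D ->
  exists f : M -> X,
    (forall x y, ms_dist M x y <= bs_dist X (f x) (f y) <= D * ms_dist M x y)
    /\ forall x, bs_norm X (f x) <= D.
Proof.
  intros HD Hdiam [f [r [Hr Hf]]].
  set (g := fun x => bs_scal X (/ r) (f x)).
  assert (Hg : forall x y, ms_dist M x y <= bs_dist X (g x) (g y) <= D * ms_dist M x y).
  { intros x y. unfold g, bs_dist.
    rewrite opp_scal, bs_scalA, Rmult_comm, <- bs_scalA, <- bs_scalDr, bs_norm_scal.
    rewrite <- opp_scal. fold (bs_dist X (f x) (f y)).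
    rewrite Rabs_right by (left; apply Rinv_0_lt_compat; lra).
    destruct (Hf x y) as [H1 H2]. pose proof (ms_dist_nonneg M x y).
    split.
    - apply Rmult_le_reg_l with r; [lra |]. rewrite <- Rmult_assoc, Rinv_r; lra.
    - apply Rmult_le_reg_l with r; [lra |]. rewrite <- Rmult_assoc, Rinv_r by lra.
      lra. }
  destruct (classic (exists x0 : M, True)) as [[x0 _] | Hempty].
  - exists (fun x => bs_add X (g x) (bs_opp X (g x0))). split.
    + intros x y. rewrite dist_translate. apply Hg.
    + intro x. fold (bs_dist X (g x) (g x0)).
      destruct (Hg x x0) as [_ H]. pose proof (Hdiam x x0).
      pose proof (Rmult_le_compat_l D _ _ HD H0). lra.
  - exists g. split; [exact Hg |]. intro x. exfalso. apply Hempty. exists x. auto.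
Qed.
End Embeddings.

Section Glue.
Variable T : nat -> MetricSpace.
Hypothesis hdiam : forall n x y, ms_dist (T n) x y <= 1.

Definition glue_dist (p q : {n : nat & T n}) : R :=
  match p, q with
  | existT _ n x, existT _ m y =>
    match Nat.eq_dec n m with
    | left e => ms_dist (T m) (eq_rect n (fun k => ms_car (T k)) x m e) y
    | right _ => Rabs (INR n - INR m)
    end
  end.

Lemma glue_dist_same n x y :
  glue_dist (existT _ n x) (existT _ n y) = ms_dist (T n) x y.
Proof.
  simpl. destruct (Nat.eq_dec n n) as [e | ne]; [| congruence].
  rewrite (UIP_refl_nat _ e). reflexivity.
Qed.

Lemma glue_dist_diff n m x y :
  n <> m -> glue_dist (existT _ n x) (existT _ m y) = Rabs (INR n - INR m).
Proof. intro H. simpl. destruct (Nat.eq_dec n m); [congruence | reflexivity]. Qed.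

Lemma nat_dist_ge1 n m : n <> m -> 1 <= Rabs (INR n - INR m).
Proof.
  intro H. apply Nat.lt_gt_cases in H as [H | H]; apply le_INR in H;
    rewrite S_INR in H; [rewrite Rabs_minus_sym |]; rewrite Rabs_right; lra.
Qed.

Lemma glue_nonneg p q : 0 <= glue_dist p q.
Proof.
  destruct p as [n x], q as [m y]. destruct (Nat.eq_dec n m) as [<- | H].
  - rewrite glue_dist_same. apply ms_dist_nonneg.
  - rewrite glue_dist_diff by exact H. apply Rabs_pos.
Qed.

Lemma glue_eq0 p q : glue_dist p q = 0 <-> p = q.
Proof.
  destruct p as [n x], q as [m y]. destruct (Nat.eq_dec n m) as [<- | H].
  - rewrite glue_dist_same, ms_dist_eq0. split; intro E.
    + subst. reflexivity.
    + apply inj_pair2_eq_dec in E; [exact E | exact Nat.eq_dec].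
  - rewrite glue_dist_diff by exact H. pose proof (nat_dist_ge1 n m H). split.
    + lra.
    + intro E. apply (f_equal (@projT1 _ _)) in E. simpl in E. congruence.
Qed.

Lemma glue_sym p q : glue_dist p q = glue_dist q p.
Proof.
  destruct p as [n x], q as [m y]. destruct (Nat.eq_dec n m) as [<- | H].
  - rewrite !glue_dist_same. apply ms_dist_sym.
  - rewrite !glue_dist_diff by congruence. apply Rabs_minus_sym.
Qed.

(** The triangle inequality; across copies it uses that each copy has
    diameter at most 1 while distinct copies are at distance at least 1. *)
Lemma glue_tri p q r : glue_dist p r <= glue_dist p q + glue_dist q r.
Proof.
  destruct p as [n x], q as [m y], r as [k z].
  pose proof (glue_nonneg (existT _ n x) (existT _ m y)).
  pose proof (glue_nonneg (existT _ m y) (existT _ k z)).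
  destruct (Nat.eq_dec n m) as [<- | Hnm]; destruct (Nat.eq_dec n k) as [<- | Hnk].
  - rewrite !glue_dist_same. apply ms_dist_tri.
  - rewrite glue_dist_same in *. rewrite !glue_dist_diff by congruence. lra.
  - rewrite glue_dist_same, (glue_dist_diff _ _ _ _ Hnm).
    rewrite glue_dist_diff in * by congruence.
    pose proof (hdiam n x z). pose proof (nat_dist_ge1 n m Hnm). lra.
  - rewrite !glue_dist_diff by congruence.
    destruct (Nat.eq_dec m k) as [<- | Hmk].
    + rewrite glue_dist_same in *. lra.
    + rewrite glue_dist_diff by exact Hmk.
      replace (INR n - INR k) with ((INR n - INR m) + (INR m - INR k)) by ring.
      apply Rabs_triang.
Qed.

Definition glue : MetricSpace :=
  {| ms_car := {n : nat & T n}; ms_dist := glue_dist;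
     ms_dist_nonneg := glue_nonneg; ms_dist_eq0 := glue_eq0;
     ms_dist_sym := glue_sym; ms_dist_tri := glue_tri |}.

Lemma glue_piece_isometric n x y :
  ms_dist glue (existT _ n x) (existT _ n y) = ms_dist (T n) x y.
Proof. apply glue_dist_same. Qed.

Lemma glue_embeds (X : BanachSpace) (u : X) D :
  bs_norm X u = 1 -> 1 <= D ->
  (forall n, embeds_with_distortion (T n) X D) ->
  embeds_with_distortion glue X (6 * D).
Proof.
  intros Hu HD HT.
  destruct (non_dep_dep_functional_choice choice (fun n => T n -> X)
              (fun n (f : T n -> X) =>
                 (forall x y, ms_dist (T n) x y <= bs_dist X (f x) (f y)
                                                <= D * ms_dist (T n) x y)
                 /\ forall x, bs_norm X (f x) <= D))
    as [f Hf].
  { intro n. apply embeds_centered; [lra | apply hdiam | apply HT]. }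
  set (offset := fun n => bs_scal X (4 * D * INR n) u).
  exists (fun p : glue => bs_add X (f (projT1 p) (projT2 p)) (offset (projT1 p))), 1.
  split; [lra |]. intros [n x] [m y]. simpl projT1. simpl projT2.
  destruct (Nat.eq_dec n m) as [<- | Hnm].
  - rewrite glue_piece_isometric, dist_translate.
    destruct (proj1 (Hf n) x y). pose proof (ms_dist_nonneg (T n) x y). nra.
  - change (ms_dist glue _ _) with (glue_dist (existT _ n x) (existT _ m y)).
    rewrite glue_dist_diff by exact Hnm.
    set (k := Rabs (INR n - INR m)).
    assert (Hk : 1 <= k) by (apply nat_dist_ge1; exact Hnm).
    assert (Hoff : bs_dist X (offset n) (offset m) = 4 * D * k).
    { unfold offset, k. rewrite dist_line, Hu.
      replace (4 * D * INR n - 4 * D * INR m) with (4 * D * (INR n - INR m)) by ring.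
      rewrite Rabs_mult, (Rabs_right (4 * D)) by lra. ring. }
    assert (Hfar : bs_dist X (f n x) (f m y) <= 2 * D).
    { pose proof (dist_le_norms X (f n x) (f m y)).
      pose proof (proj2 (Hf n) x). pose proof (proj2 (Hf m) y). lra. }
    pose proof (dist_perturb X (f n x) (f m y) (offset n) (offset m)).
    unfold bs_dist in *. split; nra.
Qed.
End Glue.

Theorem mainTheorem14 (P : BanachSpace -> Prop)
  (hfin : forall X : BanachSpace, finite_dim X -> P X)
  (Sn : nat -> MetricSpace)
  (hSfin : forall n, finite_metric (Sn n))
  (htest : test_spaces Sn P) :
  exists S : MetricSpace, test_space S P.
Proof.
  destruct (choice (fun n B => 0 <= B /\ forall x y, ms_dist (Sn n) x y <= B)
              (fun n => finite_metric_bounded (Sn n) (hSfin n))) as [B HB].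
  assert (Hs : forall n, 0 < / (1 + B n)).
  { intro n. apply Rinv_0_lt_compat. destruct (HB n). lra. }
  set (T := fun n => rescale (Sn n) (/ (1 + B n)) (Hs n)).
  assert (Hdiam : forall n x y, ms_dist (T n) x y <= 1).
  { intros n x y. simpl. unfold rescale_dist. destruct (HB n) as [HB0 HBd].
    specialize (HBd x y). apply Rmult_le_reg_l with (1 + B n); [lra |].
    rewrite <- Rmult_assoc, Rinv_r; lra. }
  exists (glue T Hdiam). intro X. split.
  - intro HnotP. destruct (proj1 (htest X) HnotP) as [D HD].
    destruct (unit_vector_of_infinite_dim X (fun Hfd => HnotP (hfin X Hfd))) as [u Hu].
    exists (6 * Rmax D 1). intros _.
    apply (glue_embeds T Hdiam X u); [exact Hu | apply Rmax_r |].
    intro n. apply embeds_rescale. apply embeds_mono with D; [apply Rmax_l | apply HD].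
  - intros [D HD]. apply (htest X). exists D. intro n.
    apply (embeds_rescale (Sn n) _ (Hs n)).
    apply (embeds_isometric (glue T Hdiam) X (T n) (fun x => existT _ n x) D
             (glue_piece_isometric T Hdiam n)).
    exact (HD tt).
Qed.
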